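(* Let $n$ and $m$ be integers with $n\geq 2$ and $1\leq m\leq\binom{n}{2}$. A two-terminal graph $G\in T_{n,m}$ is a $1$-uniformly most reliable two-terminal graph ($1$-UMRTTG) if and only if the edge $st$ joining its terminals belongs to $G$.
   Context: All graphs are finite, simple and undirected. A two-terminal graph is a graph $G$ together with two distinguished vertices $s,t$ (the terminals). Two two-terminal graphs are isomorphic if there is a graph isomorphism between them mapping the set of terminals onto the set of terminals. $T_{n,m}$ denotes the set of all pairwise nonisomorphic two-terminal graphs with $n$ vertices and $m$ edges. For a positive integer $d$, a $d$-pathset of a two-terminal graph $G$ is a spanning subgraph of $G$ containing a path of length (number of edges) at most $d$ joining $s$ and $t$. For $\rho\in[0,1]$, $R_G^d(\rho)$ is the probability that the random spanning subgraph obtained from $G$ by deleting each edge independently with probability $\rho$ is a $d$-pathset. A graph $G\in T_{n,m}$ is a $d$-UMRTTG if $R_G^d(\rho)\geq R_H^d(\rho)$ for every $H\in T_{n,m}$ and every $\rho\in[0,1]$. *)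

From HB Require Import structures.
From mathcomp Require Import all_boot all_order all_algebra.
From mathcomp Require Import boolp reals.
Set Implicit Arguments. Unset Strict Implicit. Unset Printing Implicit Defensive.
Import Order.TTheory GRing.Theory Num.Theory.

Definition simple_edges (n : nat) (E : {set {set 'I_n}}) : bool :=
  [forall e in E, #|e| == 2].

Definition two_terminal (n m : nat) (E : {set {set 'I_n}}) (s t : 'I_n) : bool :=
  [&& simple_edges E, #|E| == m & s != t].

(* p is a path (distinct vertices) from s to t in the graph with edge set F,
   given as the list of vertices after s; its length is size p. *)
Definition is_st_path (n : nat) (F : {set {set 'I_n}}) (s t : 'I_n)
    (p : seq 'I_n) : bool :=
  [&& path (fun x y => [set x; y] \in F) s p, last s p == t & uniq (s :: p)].

Definition d_pathset (n d : nat) (F : {set {set 'I_n}}) (s t : 'I_n) : Prop :=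
  exists p : seq 'I_n, is_st_path F s t p && (size p <= d)%N.

Local Open Scope ring_scope.

(* R^d_G(rho): each edge deleted independently with probability rho *)
Definition reliability (R : realType) (n d : nat) (E : {set {set 'I_n}})
    (s t : 'I_n) (rho : R) : R :=
  \sum_(F in powerset E | `[< d_pathset d F s t >])
     (1 - rho) ^+ #|F| * rho ^+ (#|E| - #|F|).

Definition d_UMRTTG (R : realType) (n m d : nat) (E : {set {set 'I_n}})
    (s t : 'I_n) : Prop :=
  two_terminal m E s t /\
  forall (E' : {set {set 'I_n}}) (s' t' : 'I_n), two_terminal m E' s' t' ->
  forall rho : R, 0 <= rho <= 1 ->
    reliability d E' s' t' rho <= reliability d E s t rho.

From HB Require Import structures.
From mathcomp Require Import all_boot all_order all_algebra.
From mathcomp Require Import boolp reals.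
Set Implicit Arguments. Unset Strict Implicit. Unset Printing Implicit Defensive.
Import Order.TTheory GRing.Theory Num.Theory.
Local Open Scope ring_scope.

(* A path of length at most one between distinct terminals is the edge [st]
   itself, so the 1-reliability is the probability [1 - rho] that this edge
   survives, or 0 if it is absent.  Every graph of T_{n,m} with m >= 1 has an
   edge, and choosing its end points as terminals gives reliability [1] at
   [rho = 0]; hence a most reliable graph must contain [st], and conversely
   [1 - rho] is the largest possible value. *)

Lemma big_powerset_binomial (R : comNzRingType) (T : finType) (A : {set T})
    (x y : R) :
  \sum_(F in powerset A) x ^+ #|F| * y ^+ (#|A| - #|F|) = (x + y) ^+ #|A|.
Proof.
(* Expand the product over all of [T] of [f i + g i]; outside [A] it is [0 + 1]. *)
pose f i := if i \in A then x else 0.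
pose g i := if i \in A then y else 1.
rewrite -prodr_const [RHS]big_mkcond /=.
rewrite (eq_bigr (fun i => f i + g i)); last first.
  by move=> i _; rewrite /f /g; case: (i \in A); rewrite ?add0r.
rewrite bigA_distr big_mkcond /=; apply: eq_bigr => J _.
rewrite powersetE; have [JA | /subsetPn [i iJ iA]] := boolP (J \subset A); last first.
  by rewrite (bigD1 i) //= iJ /f (negbTE iA) mul0r.
rewrite (bigID (mem J)) /= (eq_bigr (fun _ => x)); last first.
  by move=> i iJ; rewrite iJ /f (subsetP JA i iJ).
rewrite prodr_const (eq_bigr g); last by move=> i /negbTE ->.
rewrite -big_mkcondr /= prodr_const; congr (_ * _ ^+ _).
by rewrite -{1}(setIidPr JA) -(cardsD A J); apply: eq_card => i; rewrite !inE.
Qed.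

Lemma big_powerset_notin_binomial (R : comNzRingType) (T : finType)
    (A : {set T}) (a : T) (x y : R) : a \in A ->
  \sum_(F in powerset A | a \notin F) x ^+ #|F| * y ^+ (#|A| - #|F|) =
  y * (x + y) ^+ #|A :\ a|.
Proof.
move=> Aa; rewrite -big_powerset_binomial big_distrr /=.
rewrite (eq_bigl (fun F => F \in powerset (A :\ a))); last first.
  by move=> F /=; rewrite !powersetE subsetD1.
apply: eq_bigr => F; rewrite powersetE => FA.
rewrite mulrCA -exprS (cardsD1 a A) Aa add1n subSn //.
exact: subset_leq_card.
Qed.

Lemma d_pathset1P n (F : {set {set 'I_n}}) (s t : 'I_n) : s != t ->
  d_pathset 1 F s t <-> [set s; t] \in F.
Proof.
move=> st; split; last first.
  by move=> stF; exists [:: t]; rewrite /is_st_path /= stF eqxx inE st.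
case=> [[|x [|y p]]]; rewrite /is_st_path /= ?andbF //.
  by rewrite (negbTE st).
by case/andP=> /and3P [/andP [stF _] /eqP <- _].
Qed.

Lemma reliability1E (R : realType) n (E : {set {set 'I_n}}) (s t : 'I_n)
    (rho : R) : s != t ->
  reliability 1 E s t rho = if [set s; t] \in E then 1 - rho else 0.
Proof.
move=> st; rewrite /reliability.
under eq_bigl => F do rewrite (asbool_equiv_eq (d_pathset1P F st)) asboolb.
have [stE | stNE] := boolP ([set s; t] \in E); last first.
  apply: big1 => F /andP [+ stF].
  by rewrite powersetE => /subsetP /(_ _ stF); rewrite (negbTE stNE).
have := big_powerset_binomial E (1 - rho) rho.
rewrite (bigID (fun F : {set {set 'I_n}} => [set s; t] \in F)) /=.
rewrite big_powerset_notin_binomial // subrK !expr1n mulr1.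
by move/(congr1 (fun z => z - rho)); rewrite addrK.
Qed.

Lemma two_terminal_edge n m (E : {set {set 'I_n}}) (s t : 'I_n) :
  (0 < m)%N -> two_terminal m E s t ->
  exists a b, [set a; b] \in E /\ two_terminal m E a b.
Proof.
move=> m_gt0 /and3P [simpE /eqP cardE _].
have /card_gt0P [e eE] : (0 < #|E|)%N by rewrite cardE.
have /cards2P [a [b [ab eab]]] := forall_inP simpE e eE.
by exists a, b; rewrite -eab /two_terminal simpE cardE ab eqxx.
Qed.

Theorem corollary1 (R : realType) (n m : nat) :
  (2 <= n)%N -> (1 <= m <= 'C(n, 2))%N ->
  forall (E : {set {set 'I_n}}) (s t : 'I_n), two_terminal m E s t ->
    (d_UMRTTG R m 1 E s t <-> [set s; t] \in E).
Proof.
move=> _ /andP [m_gt0 _] E s t ttE; have /and3P [_ _ st] := ttE.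
split=> [[_ most_reliable] | stE].
  have [a [b [abE ttEab]]] := two_terminal_edge m_gt0 ttE.
  have /and3P [_ _ ab] := ttEab.
  have := most_reliable E a b ttEab 0 (ltac:(by rewrite lexx ler01)).
  by rewrite !reliability1E // abE subr0; case: ifP; rewrite // ler10.
split=> // E' s' t' /and3P [_ _ st'] rho /andP [_ rho_le1].
by rewrite !reliability1E // stE; case: ifP; rewrite // subr_ge0.
Qed.
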